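(* For every $n\ge2$, $$\sum_{w\in\mathfrak B_n}F_{\mathrm{iDes}(w)}[X]=h_{(2,1^{n-2})}[X].$$
   Context: $\mathrm{iDes}(w)=\{i: i+1\text{ appears to the left of } i \text{ in } w\}$ (descent set of $w^{-1}$); $F_S$ is Gessel's fundamental quasisymmetric function of degree $n$; $h_\rho$ is the complete homogeneous symmetric function. Butler permutations $\mathfrak B_N$ ($N\ge2$): for $w\in\mathfrak S_N$ define directed arcs: if $N$ even, $\alpha_1=(w_N,N+1)$, $\alpha_r=(w_{N-2r+2},w_{N-2r+3})$ ($2\le r\le N/2$), $\alpha_{N/2+1}=(0,w_1)$; if $N$ odd, $\alpha_r=(w_{N-2r+1},w_{N-2r+2})$ ($1\le r\le(N-1)/2$), $\alpha_{(N+1)/2}=(0,w_1)$. Arc $(a,b)$ is forward if $a<b$, else reverse; $(a,b)$ is nested by $(c,d)$ if $\min(c,d)<a,b<\max(c,d)$; two arcs cross if exactly one endpoint of one lies strictly between the endpoints of the other. Let $k$ be least with $\alpha_k,\alpha_{k+1}$ non-crossing; if it exists, $w$ is Butler iff ($\alpha_{k+1}$ nested by $\alpha_k$ and $\alpha_k$ reverse) or ($\alpha_{k+1}$ not nested by $\alpha_k$ and $\alpha_k$ forward); otherwise put $k=N/2$ ($N$ even) or $(N-1)/2$ ($N$ odd) and $w$ is Butler iff $\alpha_k$ is reverse. *)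

From HB Require Import structures.
From mathcomp Require Import all_boot all_order all_algebra all_fingroup.
From mathcomp Require Import mpoly.

Set Implicit Arguments.
Unset Strict Implicit.
Unset Printing Implicit Defensive.

Import GRing.Theory.
Local Open Scope ring_scope.

(* Quasisymmetric / symmetric functions (in countably many variables
   x_1, x_2, ...) are represented through their images in the polynomial
   ring Z[x_0,...,x_(m-1)] for EVERY number m of variables; two such
   formal power series of bounded degree are equal iff all these
   specializations agree. *)

Definition tidx (m n : nat) (t : n.-tuple 'I_m) (p : nat) : nat :=
  nth 0%N [seq val x | x <- t] p.

(* Gessel's fundamental quasisymmetric function F_S of degree n:
   the sum of x_(i_1) ... x_(i_n) over i_1 <= ... <= i_n with
   i_j < i_(j+1) whenever j \in S  (positions j are 1-indexed). *)
Definition gesselF (m n : nat) (S : pred nat) : {mpoly int[m]} :=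
  \sum_(t : n.-tuple 'I_m |
         [forall p : 'I_n, (p.+1 < n)%N ==>
            ((tidx t p <= tidx t p.+1)%N &&
             ((p.+1 \in S) ==> (tidx t p < tidx t p.+1)%N))])
     \prod_(j < n) 'X_(tnth t j).

Definition hcomplete (m k : nat) : {mpoly int[m]} :=
  \sum_(t : k.-tuple 'I_m |
         [forall p : 'I_k, (p.+1 < k)%N ==> (tidx t p <= tidx t p.+1)%N])
     \prod_(j < k) 'X_(tnth t j).

Definition hpart (m : nat) (rho : seq nat) : {mpoly int[m]} :=
  \prod_(k <- rho) hcomplete m k.

Definition word (N : nat) (w : 'S_N) : seq nat := [seq (w i).+1 | i <- enum 'I_N].

(* w_i for 1 <= i <= N *)
Definition wl (N : nat) (w : 'S_N) (i : nat) : nat := nth 0%N (word w) i.-1.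

Definition iDes (N : nat) (w : 'S_N) : pred nat :=
  fun i => [&& (0 < i)%N, (i < N)%N & (index i.+1 (word w) < index i (word w))%N].

Definition arc := (nat * nat)%type.

Definition alpha (N : nat) (w : 'S_N) (r : nat) : arc :=
  if ~~ odd N then
    if r == 1%N then (wl w N, N.+1)
    else if r == N./2.+1 then (0%N, wl w 1)
    else (wl w (N - r.*2 + 2), wl w (N - r.*2 + 3))
  else
    if r == N.+1./2 then (0%N, wl w 1)
    else (wl w (N - r.*2 + 1), wl w (N - r.*2 + 2)).

Definition numarcs (N : nat) : nat := if ~~ odd N then N./2.+1 else N.+1./2.

Definition forward (a : arc) : bool := (a.1 < a.2)%N.
Definition reverse (a : arc) : bool := ~~ forward a.

Definition strictly_between (x : nat) (a : arc) : bool :=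
  (minn a.1 a.2 < x < maxn a.1 a.2)%N.

Definition nested_by (a c : arc) : bool :=
  strictly_between a.1 c && strictly_between a.2 c.

Definition crossing (a b : arc) : bool :=
  strictly_between a.1 b (+) strictly_between a.2 b.

Definition butler (N : nat) (w : 'S_N) : bool :=
  let ks := [seq k <- iota 1 (numarcs N).-1 |
              ~~ crossing (alpha w k) (alpha w k.+1)] in
  match ks with
  | k :: _ =>
      (nested_by (alpha w k.+1) (alpha w k) && reverse (alpha w k))
      || (~~ nested_by (alpha w k.+1) (alpha w k) && forward (alpha w k))
  | [::] =>
      let k := if ~~ odd N then N./2 else N.-1./2 in reverse (alpha w k)
  end.

From Pilot Require Import Defs.
From HB Require Import structures.
From mathcomp Require Import all_boot all_order all_algebra all_fingroup.
From mathcomp Require Import mpoly.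
From mathcomp Require Import zify ring.

(* Expand each F_{iDes w} as the generating function of the words u whose
   standardization std u is w; the left-hand side becomes the sum of the
   monomials of all words u with std u Butler.  Butler's definition is
   decided by the first non-crossing pair of consecutive arcs (or by a
   default arc).  When that decisive arc joins two adjacent positions of w
   holding distinct letters of u, swapping those two letters of u reverses
   the arc, keeps every crossing pattern, and hence toggles Butlerness.
   This is a weight-preserving involution, so twice the left-hand side is
   (all words) + (signed sum over its fixed points).  The fixed points are
   words with a tie in the last two positions (n odd) or a prescribed
   pattern of the last three letters (n even), and their signed sum is
   p_2 h_1^(n-2).  Since h_1^2 = h_2 + e_2 and p_2 = h_2 - e_2, one gets
   2 h_2 h_1^(n-2) = 2 h_(2,1^(n-2)). *)

Set Implicit Arguments.
Unset Strict Implicit.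
Unset Printing Implicit Defensive.

Section Standardization.
Variables (n m : nat).
Implicit Types (u : {ffun 'I_n -> 'I_m}) (w : 'S_n) (p q r : 'I_n).

Definition std_lt u p q : bool := (u p < u q) || ((u p == u q) && (p < q)).

Lemma std_ltxx u p : std_lt u p p = false.
Proof. by rewrite /std_lt ltnn eqxx ltnn. Qed.

Lemma std_lt_trans u p q r : std_lt u p q -> std_lt u q r -> std_lt u p r.
Proof.
rewrite /std_lt => /orP[H1|/andP[/eqP E1 H1]] /orP[H2|/andP[/eqP E2 H2]].
- by rewrite (ltn_trans H1 H2).
- by rewrite -E2 H1.
- by rewrite E1 H2.
- by rewrite E1 E2 eqxx (ltn_trans H1 H2) orbT.
Qed.

Lemma std_lt_total u p q : p != q -> std_lt u p q || std_lt u q p.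
Proof. by rewrite /std_lt -!val_eqE /=; lia. Qed.

Lemma std_lt_asym u p q : std_lt u p q -> std_lt u q p = false.
Proof. by move=> H; apply/negP => /(std_lt_trans H); rewrite std_ltxx. Qed.

Definition std_rank u p : nat := #|[set q | std_lt u q p]|.

Lemma std_rank_lt u p : std_rank u p < n.
Proof.
have: [set q | std_lt u q p] \proper [set: 'I_n].
  by apply/properP; split; [exact: subsetT | exists p; rewrite ?inE ?std_ltxx].
by move/proper_card; rewrite cardsT card_ord.
Qed.

Lemma std_rank_mono u p q : std_lt u p q -> std_rank u p < std_rank u q.
Proof.
move=> H; apply: proper_card; apply/properP; split.
  by apply/subsetP => r; rewrite !inE => /std_lt_trans; apply.
by exists p; rewrite !inE ?std_ltxx.
Qed.

Definition std_rank_ord u p : 'I_n := Ordinal (std_rank_lt u p).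

Lemma std_rank_ord_inj u : injective (std_rank_ord u).
Proof.
move=> p q /(congr1 val) /= E; apply/eqP; apply/negPn/negP => npq.
by case/orP: (std_lt_total u npq) => /std_rank_mono; rewrite E ltnn.
Qed.

Definition std u : 'S_n := perm (@std_rank_ord_inj u).

Definition std_spec w u := forall p q, (w p < w q) = std_lt u p q.

Lemma stdP u : std_spec (std u) u.
Proof.
move=> p q; rewrite !permE /=.
case H: (std_lt u p q); first by rewrite std_rank_mono.
case: (eqVneq p q) => [->|npq]; first by rewrite ltnn.
have: std_lt u q p by move: (std_lt_total u npq); rewrite H.
by move/std_rank_mono/ltnW; rewrite leqNgt => /negbTE.
Qed.

Lemma card_ord_ltn k : k <= n -> #|[set v : 'I_n | v < k]| = k.
Proof.
move=> kn; have ->: [set v : 'I_n | v < k] = [set widen_ord kn i | i : 'I_k].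
  apply/setP => v; rewrite inE; apply/idP/imsetP.
    by move=> H; exists (Ordinal H) => //; apply: val_inj.
  by case=> i _ ->; rewrite /= ltn_ord.
by rewrite card_imset ?card_ord // => i j /(congr1 val) /= /val_inj.
Qed.

Lemma card_perm_lt w p : #|[set q | w q < w p]| = w p.
Proof.
have ->: [set q | w q < w p] = (w^-1)%g @: [set v : 'I_n | v < w p].
  apply/setP => q; apply/idP/imsetP.
    by rewrite inE => H; exists (w q); rewrite ?inE ?permK.
  by case=> v; rewrite !inE => H ->; rewrite permKV.
by rewrite card_imset; [exact/card_ord_ltn/ltnW | exact: perm_inj].
Qed.

Lemma std_spec_uniq w u : std_spec w u -> w = std u.
Proof.
move=> H; apply/permP => p; apply: val_inj => /=.
rewrite -card_perm_lt -[RHS]card_perm_lt; apply: eq_card => q.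
by rewrite !inE H stdP.
Qed.

Lemma std_spec_chain w u :
  (forall p (H : p.+1 < n), std_lt u ((w^-1)%g p) ((w^-1)%g (Ordinal H))) ->
  std_spec w u.
Proof.
move=> step.
have incr (a b : 'I_n) : a < b -> std_lt u ((w^-1)%g a) ((w^-1)%g b).
  pose f i := (w^-1)%g (insubd a i).
  have fE (c : 'I_n) : f c = (w^-1)%g c by rewrite /f valKd.
  have f_step i : i.+1 < n -> std_lt u (f i) (f i.+1).
    rewrite /f => Hi1; have Ei : val (insubd a i) = i by rewrite val_insubd ltnW.
    have H : (insubd a i).+1 < n by rewrite Ei.
    have -> : insubd a i.+1 = Ordinal H by apply: val_inj; rewrite /= Ei val_insubd Hi1.
    exact: step.
  rewrite -!fE; apply: (@homo_ltn_in _ [pred i | i < n] f (std_lt u)); rewrite ?unfold_in //.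
  - by move=> y x z; apply: std_lt_trans.
  - by move=> i j Hi Hj k; rewrite !unfold_in /= in Hi Hj *; lia.
  - by move=> i _; rewrite unfold_in; apply: f_step.
move=> p q; case: (ltngtP (w p) (w q)) => H.
- by have := incr _ _ H; rewrite !permK.
- by have := incr _ _ H; rewrite !permK => /std_lt_asym.
- by rewrite (perm_inj (val_inj H)) std_ltxx.
Qed.

End Standardization.

Section GesselExpansion.
Variables (n m : nat).
Implicit Types (u : {ffun 'I_n -> 'I_m}) (w : 'S_n) (p : 'I_n).

Definition reorder w u : n.-tuple 'I_m := [tuple u ((w^-1)%g j) | j < n].

Lemma tidx_reorder w u k (H : k < n) :
  tidx (reorder w u) k = u ((w^-1)%g (Ordinal H)).
Proof.
rewrite /tidx (nth_map (u ((w^-1)%g (Ordinal H)))) ?size_tuple //.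
by rewrite -[k]/(nat_of_ord (Ordinal H)) -tnth_nth tnth_mktuple.
Qed.

Lemma index_word w (v : 'I_n) : index (v : nat).+1 (word w) = (w^-1)%g v.
Proof.
have -> : (v : nat).+1 = (fun i => (w i).+1) ((w^-1)%g v) by rewrite permKV.
rewrite /word index_map ?index_enum_ord //.
by move=> i j [] /val_inj /perm_inj.
Qed.

Lemma iDes_inv w p (H : p.+1 < n) :
  (p.+1 \in iDes w) = ((w^-1)%g (Ordinal H) < (w^-1)%g p).
Proof.
rewrite unfold_in /iDes /= H.
by rewrite -[p.+2]/((Ordinal H : nat).+1) !index_word.
Qed.

Definition gessel_cond w (t : n.-tuple 'I_m) : bool :=
  [forall p : 'I_n, (p.+1 < n) ==>
            ((tidx t p <= tidx t p.+1) &&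
             ((p.+1 \in iDes w) ==> (tidx t p < tidx t p.+1)))].

Lemma gessel_cond_reorder w u : gessel_cond w (reorder w u) = (std u == w).
Proof.
apply/idP/eqP => [/forallP cond | <-].
  apply/esym/std_spec_uniq/std_spec_chain => p H.
  have := cond p; rewrite H /= (tidx_reorder w u (ltn_ord p)) (tidx_reorder w u H).
  rewrite iDes_inv (_ : Ordinal (ltn_ord p) = p); last exact: val_inj.
  have D : ((w^-1)%g p : nat) != (w^-1)%g (Ordinal H).
    by apply/eqP => /val_inj /perm_inj /(congr1 val) /=; lia.
  by move: D; rewrite /std_lt -val_eqE /=; lia.
apply/forallP => p; apply/implyP => H.
rewrite (tidx_reorder _ u (ltn_ord p)) (tidx_reorder _ u H) iDes_inv.
rewrite (_ : Ordinal (ltn_ord p) = p); last exact: val_inj.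
have := stdP u ((std u)^-1 p)%g ((std u)^-1 (Ordinal H))%g.
by rewrite !permKV /= ltnSn /std_lt -val_eqE /= => /esym; lia.
Qed.

Definition word_mon u : {mpoly int[m]} := \prod_(j < n) 'X_(u j).

Lemma sum_gesselF_std (P : pred 'S_n) :
  (\sum_(w | P w) gesselF m n (iDes w) =
   \sum_(u : {ffun 'I_n -> 'I_m} | P (std u)) word_mon u)%R.
Proof.
rewrite (partition_big (@std n m) P) //=.
apply: eq_bigr => w Pw; rewrite /gesselF.
rewrite (reindex_onto (reorder w) (fun t => [ffun p => tnth t (w p)])); last first.
  move=> t _; apply: eq_from_tnth => j.
  by rewrite tnth_mktuple ffunE permKV.
apply: eq_big => [u|u _].
  have -> : [ffun p => tnth (reorder w u) (w p)] == u.
    by apply/eqP/ffunP => p; rewrite ffunE tnth_mktuple permK.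
  rewrite andbT.
  change (gessel_cond w (reorder w u) = P (std u) && (std u == w)).
  by rewrite gessel_cond_reorder; case: eqP => [->|_]; rewrite ?Pw ?andbF.
rewrite /word_mon [RHS](reindex_inj (@perm_inj _ (w^-1)%g)) /=.
by apply: eq_bigr => j _; rewrite tnth_mktuple.
Qed.

End GesselExpansion.

Definition swapn i x := if x == i then i.+1 else if x == i.+1 then i else x.

Lemma swapn_cases (q x : nat) :
  (swapn q x = q.+1 /\ x = q) \/ (swapn q x = q /\ x = q.+1) \/
  (swapn q x = x /\ x <> q /\ x <> q.+1).
Proof.
rewrite /swapn; case: (eqVneq x q) => [->|H1]; first by left.
case: (eqVneq x q.+1) => [->|H2]; first by right; left.
by right; right; split => //; split; apply/eqP.
Qed.

Ltac case_swapn q x := let H := fresh "Hs" in let H' := fresh "Hs" in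
  case: (swapn_cases q x) => [[-> H]|[[-> H]|[-> [H H']]]].

Lemma swapnE q : swapn q q = q.+1 /\ swapn q q.+1 = q.
Proof. by rewrite /swapn eqxx (_ : (q.+1 == q) = false) ?eqxx //; lia. Qed.

Ltac case_ifs :=
  repeat (match goal with |- context[if ?b then _ else _] =>
            let H := fresh "H" in case: (boolP b) => H end).

Section Arcs.
Variable N : nat.
Implicit Types (g : nat -> nat) (a b : Defs.arc).

(* [alpha], [butler] and their ingredients with the word replaced by an
   arbitrary letter function [g], 1-indexed like [wl w]. *)
Definition arcs g r : Defs.arc :=
  if ~~ odd N then
    if r == 1%N then (g N, N.+1)
    else if r == N./2.+1 then (0%N, g 1%N)
    else (g (N - r.*2 + 2), g (N - r.*2 + 3))
  else
    if r == N.+1./2 then (0%N, g 1%N)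
    else (g (N - r.*2 + 1), g (N - r.*2 + 2)).

Definition noncrossing_idx g :=
  [seq k <- iota 1 (numarcs N).-1 | ~~ crossing (arcs g k) (arcs g k.+1)].

Definition default_idx := if ~~ odd N then N./2 else N.-1./2.

Definition butler_rule a b :=
  (nested_by b a && reverse a) || (~~ nested_by b a && forward a).

Definition butler_of g :=
  match noncrossing_idx g with
  | k :: _ => butler_rule (arcs g k) (arcs g k.+1)
  | [::] => reverse (arcs g default_idx)
  end.

Definition decisive_idx g := head default_idx (noncrossing_idx g).

Lemma butlerE (w : 'S_N) : butler w = butler_of (wl w).
Proof. by []. Qed.

Lemma arcs_ext g g' r : g =1 g' -> arcs g r = arcs g' r.
Proof. by move=> E; rewrite /arcs !E. Qed.

Definition arc_rev a : Defs.arc := (a.2, a.1).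

Lemma strictly_between_rev x a : strictly_between x (arc_rev a) = strictly_between x a.
Proof. by rewrite /strictly_between /= minnC maxnC. Qed.

Lemma crossing_revl a b : crossing (arc_rev a) b = crossing a b.
Proof. by rewrite /crossing /= addbC. Qed.

Lemma crossing_revr a b : crossing a (arc_rev b) = crossing a b.
Proof. by rewrite /crossing !strictly_between_rev. Qed.

Lemma nested_by_revr a b : nested_by a (arc_rev b) = nested_by a b.
Proof. by rewrite /nested_by !strictly_between_rev. Qed.

Lemma forward_rev a : a.1 != a.2 -> forward (arc_rev a) = ~~ forward a.
Proof. by rewrite /forward /=; lia. Qed.

Lemma butler_rule_rev a b : a.1 != a.2 -> butler_rule (arc_rev a) b = ~~ butler_rule a b.
Proof.
move=> H; rewrite /butler_rule nested_by_revr /reverse forward_rev //.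
by case: (nested_by b a); case: (forward a).
Qed.

Lemma default_idxE : default_idx = (numarcs N).-1.
Proof. by rewrite /default_idx /numarcs; case: (odd N) (odd_double_half N) => /=; lia. Qed.

Lemma filter_iota_head (P : pred nat) (i L k : nat) (s : seq nat) :
  [seq x <- iota i L | P x] = k :: s -> forall j, i <= j < k -> ~~ P j.
Proof.
elim: L i => [|L IH] i //=.
case: ifP => Pi; first by move=> [<- _] j; lia.
move=> /IH H j Hj; case: (eqVneq j i) => [->|ji]; first by rewrite Pi.
by apply: H; lia.
Qed.

Lemma decisive_idx_range g : 2 <= N -> 1 <= decisive_idx g <= (numarcs N).-1.
Proof.
move=> N2; rewrite /decisive_idx; case E: (noncrossing_idx g) => [|k s] /=.
  by rewrite default_idxE; move: N2; rewrite /numarcs;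
     case: (odd N) (odd_double_half N) => /=; lia.
have : k \in noncrossing_idx g by rewrite E mem_head.
by rewrite mem_filter mem_iota => /andP[_]; lia.
Qed.

Lemma crossing_before_decisive g k : 2 <= N -> decisive_idx g = k -> 2 <= k ->
  crossing (arcs g k.-1) (arcs g k).
Proof.
move=> N2 Hk k2; have := decisive_idx_range g N2; rewrite Hk => Hr.
have Hmem : k.-1 \in iota 1 (numarcs N).-1 by rewrite mem_iota; lia.
move: Hk; rewrite /decisive_idx; case E: (noncrossing_idx g) => [|k0 s] /= Hk.
  have : k.-1 \notin noncrossing_idx g by rewrite E.
  by rewrite mem_filter Hmem andbT negbK prednK //; lia.
have := filter_iota_head E (j := k.-1); rewrite Hk negbK prednK; last lia.
by apply; lia.
Qed.

(* Reversing the decisive arc changes no crossing relation between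
   consecutive arcs, so the decisive index stays and the verdict flips. *)
Lemma butler_of_rev_decisive g g' k : 2 <= N -> decisive_idx g = k ->
  (forall r, 1 <= r <= numarcs N ->
     arcs g' r = if r == k then arc_rev (arcs g r) else arcs g r) ->
  (arcs g k).1 != (arcs g k).2 ->
  noncrossing_idx g' = noncrossing_idx g /\ butler_of g' = ~~ butler_of g.
Proof.
move=> N2 Hk Hs Hd.
have Eks : noncrossing_idx g' = noncrossing_idx g.
  apply: eq_in_filter => j; rewrite mem_iota => Hj.
  rewrite !Hs; try lia.
  by case: (j == k); case: (j.+1 == k); rewrite ?crossing_revl ?crossing_revr.
split=> //; rewrite /butler_of Eks.
have := decisive_idx_range g N2; rewrite Hk => Hr.
move: Hk; rewrite /decisive_idx; case E: (noncrossing_idx g) => [|k0 s] /= Hk.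
  by rewrite Hs ?Hk ?eqxx /reverse ?forward_rev // -?Hk //; lia.
subst k; rewrite !Hs ?eqxx; try lia.
by rewrite (_ : (k0.+1 == k0) = false) ?butler_rule_rev //; lia.
Qed.

(* Indices of the arcs joining two adjacent positions [arc_pos k] and
   [(arc_pos k).+1] of the word. *)
Definition inner_idx k :=
  if ~~ odd N then (2 <= k <= N./2) else (1 <= k <= N.-1./2).
Definition arc_pos k := if ~~ odd N then N - k.*2 + 2 else N - k.*2 + 1.

Lemma arc_pos_range k : inner_idx k -> 2 <= arc_pos k /\ (arc_pos k).+1 <= N.
Proof. by rewrite /inner_idx /arc_pos; case: (odd N) (odd_double_half N) => /=; lia. Qed.

Lemma arcs_inner g k : inner_idx k -> arcs g k = (g (arc_pos k), g (arc_pos k).+1).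
Proof.
rewrite /inner_idx /arcs /arc_pos; case: (odd N) (odd_double_half N) => /= HN Hk;
case_ifs; try (exfalso; lia); repeat f_equal; lia.
Qed.

Lemma arcs_swapn g k : inner_idx k -> forall r, 1 <= r <= numarcs N ->
  arcs (fun x => g (swapn (arc_pos k) x)) r =
  if r == k then arc_rev (arcs g r) else arcs g r.
Proof.
rewrite /inner_idx /arcs /arc_pos /numarcs /swapn /arc_rev;
case: (odd N) (odd_double_half N) => /= HN Hk r Hr;
case_ifs => /=; try (exfalso; lia); repeat f_equal; lia.
Qed.

End Arcs.

Section Words.
Variables (n m : nat).
Implicit Types (u : {ffun 'I_n -> 'I_m}) (w : 'S_n) (p : 'I_n).

(* The letter of [w] at the 0-indexed position [y]; 0 past the end. *)
Definition letter w (y : nat) := nth 0 (word w) y.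

Lemma letter_ord w p : letter w p = (w p).+1.
Proof.
by rewrite /letter /word (nth_map p) ?size_enum_ord ?ltn_ord // nth_ord_enum.
Qed.

Lemma letter_default w y : n <= y -> letter w y = 0.
Proof. by move=> H; rewrite /letter nth_default // size_map size_enum_ord. Qed.

Lemma wlE w x : wl w x = letter w x.-1.
Proof. by []. Qed.

Lemma letter_inj w y z : y < n -> z < n -> letter w y = letter w z -> y = z.
Proof.
move=> Hy Hz; rewrite -[y]/(nat_of_ord (Ordinal Hy)) -[z]/(nat_of_ord (Ordinal Hz)).
by rewrite !letter_ord => [[/val_inj /perm_inj ->]].
Qed.

Lemma letter_neq w y z : y < n -> z < n -> y != z -> letter w y != letter w z.
Proof. by move=> Hy Hz; apply: contra => /eqP /letter_inj ->. Qed.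

Lemma letter_gt0 w y : y < n -> 0 < letter w y.
Proof. by move=> Hy; rewrite -[y]/(nat_of_ord (Ordinal Hy)) letter_ord. Qed.

Lemma letter_le w y : letter w y <= n.
Proof.
case: (ltnP y n) => Hy; last by rewrite letter_default.
by rewrite -[y]/(nat_of_ord (Ordinal Hy)) letter_ord ltn_ord.
Qed.

Definition swap_ord (q : nat) p : 'I_n := insubd p (swapn q p).

Lemma val_swap_ord (q : nat) p :
  val (swap_ord q p) = if q.+1 < n then swapn q p else p.
Proof.
rewrite /swap_ord val_insubd; have := ltn_ord p.
by case_swapn q (nat_of_ord p); case_ifs => //=; lia.
Qed.

Lemma swap_ordK (q : nat) : involutive (swap_ord q).
Proof.
move=> p; apply: val_inj; case: (ltnP q.+1 n) => Hq; rewrite !val_swap_ord ?Hq;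
  last by rewrite ltnNge Hq.
by case_swapn q (nat_of_ord p); rewrite /swapn; case_ifs => //=; lia.
Qed.

Definition swap_perm (q : nat) : 'S_n := perm (inv_inj (swap_ordK q)).

Lemma swap_permE (q : nat) p : swap_perm q p = swap_ord q p.
Proof. exact: permE. Qed.

Lemma letter_swap_perm w (q y : nat) : q.+1 < n ->
  letter (swap_perm q * w)%g y = letter w (swapn q y).
Proof.
move=> Hq; case: (ltnP y n) => Hy.
  rewrite -[y]/(nat_of_ord (Ordinal Hy)) letter_ord permM swap_permE /=.
  by rewrite -letter_ord val_swap_ord Hq.
by rewrite !letter_default //; case_swapn q y; lia.
Qed.

Lemma wl_swap_perm w (q x : nat) : 1 <= q -> q.+1 < n ->
  wl (swap_perm q * w)%g x = wl w (swapn q.+1 x).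
Proof.
move=> H1 Hq; rewrite !wlE letter_swap_perm //; congr letter.
by case_swapn q.+1 x; case_swapn q x.-1; lia.
Qed.

(* The letter of the word [u] at the 0-indexed position [k]; 0 past the end. *)
Definition wval u (k : nat) : nat := oapp (fun p : 'I_n => val (u p)) 0 (insub k).

Lemma wval_ord u p : wval u p = u p.
Proof. by rewrite /wval valK. Qed.

Definition swap_word (q : nat) u : {ffun 'I_n -> 'I_m} := [ffun p => u (swap_ord q p)].

Lemma wval_swap_word u (q x : nat) : q.+1 < n ->
  wval (swap_word q u) x = wval u (swapn q x).
Proof.
move=> Hq; case: (ltnP x n) => Hx.
  by rewrite -[x]/(nat_of_ord (Ordinal Hx)) wval_ord ffunE -wval_ord val_swap_ord Hq.
by case_swapn q x; try lia; rewrite /wval !insubF // ltnNge Hx.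
Qed.

Lemma swap_wordK (q : nat) : involutive (swap_word q).
Proof. by move=> u; apply/ffunP => p; rewrite !ffunE swap_ordK. Qed.

Lemma word_mon_swap_word (q : nat) u : word_mon (swap_word q u) = word_mon u.
Proof.
rewrite /word_mon [RHS](reindex_inj (inv_inj (swap_ordK q))) /=.
by apply: eq_bigr => j _; rewrite ffunE.
Qed.

Lemma std_swap_word u (q : nat) : q.+1 < n -> wval u q != wval u q.+1 ->
  std (swap_word q u) = (swap_perm q * std u)%g.
Proof.
move=> Hq Hd; apply/esym/std_spec_uniq => p p'.
rewrite !permM !swap_permE stdP /std_lt !ffunE.
case: (eqVneq (u (swap_ord q p)) (u (swap_ord q p'))) => E /=; rewrite ?orbF //.
rewrite E ltnn /=.
have Hv := val_swap_ord q p; have Hv' := val_swap_ord q p'; rewrite Hq in Hv Hv'.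
have En : wval u (val (swap_ord q p)) = wval u (val (swap_ord q p')).
  by rewrite !wval_ord E.
rewrite Hv Hv' in En; have [S1 S2] := swapnE q.
have : ~~ (((p : nat) == q) && ((p' : nat) == q.+1)) /\
       ~~ (((p : nat) == q.+1) && ((p' : nat) == q)).
  by split; apply/negP => /andP[/eqP a /eqP b]; move: En Hd; rewrite a b S1 S2 => ->;
     rewrite eqxx.
by rewrite Hv Hv'; case_swapn q (nat_of_ord p); case_swapn q (nat_of_ord p'); lia.
Qed.

Lemma std_tie u (q : nat) : q.+1 < n -> wval u q = wval u q.+1 ->
  letter (std u) q.+1 = (letter (std u) q).+1.
Proof.
move=> Hq E; have Hq0 : q < n by lia.
set p := Ordinal Hq0; set p' := Ordinal Hq.
rewrite -[q]/(nat_of_ord p) -[q.+1]/(nat_of_ord p') !letter_ord; congr S.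
move: E; rewrite -[q]/(nat_of_ord p) -[q.+1]/(nat_of_ord p') !wval_ord => E.
have L : std u p < std u p' by rewrite stdP /std_lt -val_eqE /=; move: E; lia.
apply/eqP; rewrite eqn_leq L andbT leqNgt; apply/negP => L2.
have Hv : (std u p).+1 < n by move: (ltn_ord (std u p')); lia.
set r := ((std u)^-1)%g (Ordinal Hv).
have Er : std u r = Ordinal Hv by rewrite permKV.
have H1 : std_lt u p r by rewrite -stdP Er /=.
have H2 : std_lt u r p' by rewrite -stdP Er /=.
by move: H1 H2; rewrite /std_lt -!val_eqE /= E; lia.
Qed.

Lemma std_letter_lt u (a c : nat) : a < c -> c < n ->
  (letter (std u) a < letter (std u) c) = (wval u a <= wval u c).
Proof.
move=> ac cn; have an : a < n by lia.
rewrite -[a]/(nat_of_ord (Ordinal an)) -[c]/(nat_of_ord (Ordinal cn)).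
by rewrite !letter_ord !wval_ord ltnS stdP /std_lt -val_eqE /=; lia.
Qed.

Lemma std_letter_gt u (a c : nat) : a < c -> c < n ->
  (letter (std u) c < letter (std u) a) = (wval u c < wval u a).
Proof.
move=> ac cn; have an : a < n by lia.
rewrite -[a]/(nat_of_ord (Ordinal an)) -[c]/(nat_of_ord (Ordinal cn)).
by rewrite !letter_ord !wval_ord ltnS stdP /std_lt -val_eqE /=; lia.
Qed.

End Words.

Section Involution.
Variables (n m : nat).
Hypothesis n2 : 2 <= n.
Implicit Types (u : {ffun 'I_n -> 'I_m}).

Definition dec_idx u := decisive_idx n (wl (std u)).

(* 0-indexed position of the left endpoint of the decisive arc. *)
Definition dec_pos u := (arc_pos n (dec_idx u)).-1.

Definition movable u :=
  inner_idx n (dec_idx u) && (wval u (dec_pos u) != wval u (dec_pos u).+1).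

Definition invol u := if movable u then swap_word (dec_pos u) u else u.

Lemma decisive_arcE u : inner_idx n (dec_idx u) ->
  arcs n (wl (std u)) (dec_idx u) =
  (letter (std u) (dec_pos u), letter (std u) (dec_pos u).+1).
Proof.
move=> G; have [P1 P2] := arc_pos_range G.
by rewrite arcs_inner // !wlE /dec_pos; congr (_, _); congr letter; lia.
Qed.

(* A tie would make the decisive arc [(x, x.+1)], which crosses nothing. *)
Lemma decisive_letters_neq u : inner_idx n (dec_idx u) -> 2 <= dec_idx u ->
  wval u (dec_pos u) != wval u (dec_pos u).+1.
Proof.
move=> G K2; have [P1 P2] := arc_pos_range G.
have := crossing_before_decisive n2 (erefl (dec_idx u)) K2.
rewrite -/(dec_idx u) decisive_arcE //; apply: contraTneq => E.
rewrite std_tie /crossing /strictly_between /=; [lia | rewrite /dec_pos; lia | exact: E].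
Qed.

Lemma invol_movable u : movable u ->
  [/\ movable (invol u), dec_idx (invol u) = dec_idx u,
      butler (std (invol u)) = ~~ butler (std u) & invol (invol u) = u].
Proof.
move=> Mu; have /andP[G D] := Mu; have [P1 P2] := arc_pos_range G.
set q := dec_pos u.
have Hq : q.+1 < n by rewrite /q /dec_pos; lia.
have Hq1 : 1 <= q by rewrite /q /dec_pos; lia.
have Hi : swap_word q u = invol u by rewrite /invol Mu.
have Hstd : std (invol u) = (swap_perm n q * std u)%g by rewrite -Hi std_swap_word.
have Hg x : wl (std (invol u)) x = wl (std u) (swapn (arc_pos n (dec_idx u)) x).
  by rewrite Hstd wl_swap_perm // /q /dec_pos prednK //; lia.
have [Eks Eb] : noncrossing_idx n (wl (std (invol u))) = noncrossing_idx n (wl (std u)) /\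
                butler_of n (wl (std (invol u))) = ~~ butler_of n (wl (std u)).
  apply: (butler_of_rev_decisive n2 (erefl (dec_idx u))).
    by move=> r Hr; rewrite (arcs_ext _ _ Hg); apply: arcs_swapn.
  rewrite decisive_arcE //=; apply: contra D => /eqP /letter_inj E.
  by move: (E ltac:(lia) Hq); lia.
have EK : dec_idx (invol u) = dec_idx u by rewrite /dec_idx /decisive_idx Eks.
have Eq : dec_pos (invol u) = q by rewrite /dec_pos EK.
have Mi : movable (invol u).
  have [S1 S2] := swapnE q.
  by rewrite /movable EK G Eq -Hi !wval_swap_word // S1 S2 eq_sym.
by split => //; rewrite {1}/invol Mi Eq -Hi swap_wordK.
Qed.

Lemma invol_id u : ~~ movable u -> invol u = u.
Proof. by rewrite /invol => /negbTE ->. Qed.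

Lemma involK : involutive invol.
Proof.
move=> u; case: (boolP (movable u)) => M; first by case: (invol_movable M).
by rewrite !invol_id.
Qed.

Lemma movable_invol u : movable (invol u) = movable u.
Proof.
case: (boolP (movable u)) => M; first by case: (invol_movable M).
by rewrite invol_id //; apply/negbTE.
Qed.

Lemma word_mon_invol u : word_mon (invol u) = word_mon u.
Proof. by rewrite /invol; case: ifP => // _; rewrite word_mon_swap_word. Qed.

End Involution.

Lemma noncrossing_idx_head1 N g : 2 <= N ->
  ~~ crossing (arcs N g 1) (arcs N g 2) -> exists s, noncrossing_idx N g = 1 :: s.
Proof.
move=> N2 H; rewrite /noncrossing_idx.
have : 1 <= (numarcs N).-1 by rewrite /numarcs; case: (odd N) (odd_double_half N) => /=; lia.
by case: (numarcs N).-1 => [//|L] _ /=; rewrite H; eexists.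
Qed.

Lemma crossing_adjacent x y z : y != x -> y != x.+1 -> z != x -> z != x.+1 ->
  crossing (x, x.+1) (y, z) = false.
Proof. by rewrite /crossing /strictly_between /=; lia. Qed.

Section FixedOdd.
Variables (n m : nat).
Hypotheses (n2 : 2 <= n) (n_odd : odd n).
Implicit Types (u : {ffun 'I_n -> 'I_m}).

(* A tie at the last two positions makes the first arc [(x, x.+1)]: it crosses
   no other arc, so it is decisive, and it is forward. *)
Lemma butler_tie_odd u : wval u (n - 2) = wval u (n - 1) ->
  dec_idx u = 1 /\ butler (std u).
Proof.
move=> E; have N3 : 3 <= n by move: n2 n_odd; lia.
set g := wl (std u); set x := letter (std u) (n - 2).
have G1 : inner_idx n 1 by rewrite /inner_idx n_odd /=; lia.
have Tx : letter (std u) (n - 1) = x.+1.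
  rewrite (_ : n - 1 = (n - 2).+1); last lia.
  by apply: std_tie; [lia | rewrite E; congr wval; lia].
have A1 : arcs n g 1 = (x, x.+1).
  by rewrite arcs_inner // /arc_pos n_odd /= /g !wlE -Tx; congr (_, _); congr letter; lia.
have Hend j : 1 <= j <= n - 2 -> (g j != x) && (g j != x.+1).
  by move=> Hj; rewrite /g wlE /x -Tx !letter_neq //; lia.
have NC : ~~ crossing (arcs n g 1) (arcs n g 2).
  rewrite A1 /arcs n_odd /=; case: ifP => Hc.
    have x0 : 0 < x by apply: letter_gt0; lia.
    by case/andP: (Hend 1 ltac:(lia)) => H1 H2; rewrite crossing_adjacent //; lia.
  have := Hend (n - 4 + 1) ltac:(lia); have := Hend (n - 4 + 2) ltac:(lia).
  by move=> /andP[H1 H2] /andP[H3 H4]; rewrite crossing_adjacent.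
have [s Es] := noncrossing_idx_head1 n2 NC.
split; first by rewrite /dec_idx /decisive_idx -/g Es.
rewrite butlerE /butler_of -/g Es A1 /butler_rule /nested_by /strictly_between.
by rewrite /forward /=; apply/orP; right; apply/andP; split; lia.
Qed.

Lemma dec_pos_odd1 u : dec_idx u = 1 -> dec_pos u = n - 2 /\ (dec_pos u).+1 = n - 1.
Proof. by move=> K1; rewrite /dec_pos K1 /arc_pos n_odd /=; split; lia. Qed.

Lemma not_movable_odd u : ~~ movable u = (wval u (n - 2) == wval u (n - 1)).
Proof.
have R := decisive_idx_range (wl (std u)) n2.
have G : inner_idx n (dec_idx u).
  by move: R; rewrite /inner_idx /numarcs /dec_idx n_odd /=; lia.
apply/idP/eqP => [|E]; last first.
  have [K1 _] := butler_tie_odd E; have [P1 P2] := dec_pos_odd1 K1.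
  by rewrite /movable P2 P1 E eqxx andbF.
rewrite /movable G negbK => /eqP E.
case: (leqP 2 (dec_idx u)) => K2; first by have := decisive_letters_neq n2 G K2; rewrite E eqxx.
have K1 : dec_idx u = 1 by move: K2 R; rewrite /dec_idx; lia.
by move: E; have [P1 P2] := dec_pos_odd1 K1; rewrite P2 P1.
Qed.

End FixedOdd.

Section FixedEven.
Variables (n m : nat).
Hypotheses (n4 : 4 <= n) (n_even : ~~ odd n).
Implicit Types (u : {ffun 'I_n -> 'I_m}).

Definition last_max u :=
  (wval u (n - 3) <= wval u (n - 1)) && (wval u (n - 2) <= wval u (n - 1)).
Definition last_min u :=
  (wval u (n - 1) < wval u (n - 3)) && (wval u (n - 1) < wval u (n - 2)).

Lemma arcs_even12 u :
  arcs n (wl (std u)) 1 = (letter (std u) (n - 1), n.+1) /\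
  arcs n (wl (std u)) 2 = (letter (std u) (n - 3), letter (std u) (n - 2)).
Proof.
rewrite /arcs n_even /=; split; first by rewrite wlE; congr (_, _); congr letter; lia.
case: ifP => H; first lia.
by rewrite !wlE; congr (_, _); congr letter; lia.
Qed.

Lemma not_movable_even u :
  ~~ movable u = ~~ crossing (arcs n (wl (std u)) 1) (arcs n (wl (std u)) 2).
Proof.
have N2 : 2 <= n by lia.
apply/idP/idP; last first.
  move=> NC; have [s Es] := noncrossing_idx_head1 N2 NC.
  have K1 : dec_idx u = 1 by rewrite /dec_idx /decisive_idx Es.
  by rewrite /movable K1 /inner_idx n_even.
move=> NM; apply/negP => C; move/negP: NM; apply.
have R := decisive_idx_range (wl (std u)) N2.
have K2 : 2 <= dec_idx u.
  move: R; rewrite /dec_idx /decisive_idx; case E: (noncrossing_idx n (wl (std u))) => [|k0 s] /=.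
    by rewrite /default_idx /numarcs n_even /=; lia.
  have : k0 \in noncrossing_idx n (wl (std u)) by rewrite E mem_head.
  rewrite mem_filter => /andP[NC _].
  by case: (eqVneq k0 1) => [E1|]; [move: NC; rewrite E1 C | lia].
have G : inner_idx n (dec_idx u) by move: R K2; rewrite /inner_idx /dec_idx /numarcs n_even /=; lia.
by rewrite /movable G decisive_letters_neq.
Qed.

(* The first arc is [(w_n, n+1)] and the second joins positions n-2 and n-1:
   they cross iff w_n lies strictly between w_(n-2) and w_(n-1). *)
Lemma fixed_even u :
  [/\ ~~ movable u = last_max u || last_min u, ~~ (last_max u && last_min u) &
      (~~ movable u -> butler (std u) = last_max u)].
Proof.
have N2 : 2 <= n by lia.
have [A1 A2] := arcs_even12 u.
have Ex : last_max u = (letter (std u) (n - 3) < letter (std u) (n - 1)) &&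
                       (letter (std u) (n - 2) < letter (std u) (n - 1)).
  by rewrite /last_max !std_letter_lt //; lia.
have Ey : last_min u = (letter (std u) (n - 1) < letter (std u) (n - 3)) &&
                       (letter (std u) (n - 1) < letter (std u) (n - 2)).
  by rewrite /last_min !std_letter_gt //; lia.
have d1 := letter_neq (std u) (y := n - 3) (z := n - 1) ltac:(lia) ltac:(lia) ltac:(lia).
have d2 := letter_neq (std u) (y := n - 2) (z := n - 1) ltac:(lia) ltac:(lia) ltac:(lia).
have d3 := letter_neq (std u) (y := n - 3) (z := n - 2) ltac:(lia) ltac:(lia) ltac:(lia).
have b1 := letter_le (std u) (n - 3); have b2 := letter_le (std u) (n - 2).
have b3 := letter_le (std u) (n - 1).
rewrite not_movable_even A1 A2 Ex Ey; split.
- by rewrite /crossing /strictly_between /=; lia.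
- by lia.
move=> NC; have NC' := NC; rewrite -A1 -A2 in NC'.
have [s Es] := noncrossing_idx_head1 N2 NC'.
rewrite butlerE /butler_of Es A1 A2 /butler_rule /nested_by /strictly_between.
by rewrite /reverse /forward /=; move: NC; rewrite /crossing /strictly_between /=; lia.
Qed.

End FixedEven.

Section FixedTwo.
Variables (m : nat).
Implicit Types (u : {ffun 'I_2 -> 'I_m}).

Lemma not_movable_two u : ~~ movable u.
Proof. by rewrite /movable /inner_idx /=; have := decisive_idx_range (wl (std u)) (leqnn 2); lia. Qed.

Lemma butler_two u : butler (std u) = (wval u 0 <= wval u 1).
Proof.
have a0 := letter_gt0 (std u) (y := 0) erefl; have b0 := letter_le (std u) 0.
have a1 := letter_gt0 (std u) (y := 1) erefl; have b1 := letter_le (std u) 1.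
have d := letter_neq (std u) (y := 0) (z := 1) erefl erefl erefl.
rewrite -std_letter_lt // butlerE /butler_of /noncrossing_idx /arcs /default_idx !wlE /=.
rewrite /crossing /strictly_between /butler_rule /nested_by /reverse /forward /=.
by case: ifP => /=; lia.
Qed.

End FixedTwo.

Import GRing.Theory Num.Theory.
Local Open Scope ring_scope.

Lemma mpoly_int_mulr2n_inj m : injective (fun x : {mpoly int[m]} => x *+ 2).
Proof.
move=> x y /= /eqP; rewrite -subr_eq0 -mulrnBl => /eqP H; apply/eqP.
rewrite -subr_eq0; apply/eqP/mpolyP => mm; have := congr1 (mcoeff mm) H.
by rewrite mcoeffMn mcoeff0 => /eqP; rewrite mulrn_eq0 /= => /eqP.
Qed.

Section SignedSum.
Variables (n m : nat).
Hypothesis n2 : (2 <= n)%N.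
Implicit Types (u : {ffun 'I_n -> 'I_m}).

Definition signed_mon u : {mpoly int[m]} :=
  if butler (std u) then word_mon u else - word_mon u.

Lemma sum_movable_signed_mon : \sum_(u | movable u) signed_mon u = 0.
Proof.
apply: (@mpoly_int_mulr2n_inj m); rewrite /= mul0rn mulr2n; apply/eqP.
rewrite addr_eq0; apply/eqP.
rewrite {1}(reindex_inj (inv_inj (involK n2))) /= -sumrN.
apply: eq_big => u; first by rewrite (movable_invol n2).
move=> M; rewrite (movable_invol n2) in M; have [_ _ Hb _] := invol_movable n2 M.
by rewrite /signed_mon Hb word_mon_invol; case: (butler (std u)); rewrite ?opprK.
Qed.

Lemma sum_butler_word_mon2 :
  (\sum_(u : {ffun 'I_n -> 'I_m} | butler (std u)) word_mon u) *+ 2 =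
  \sum_(u : {ffun 'I_n -> 'I_m}) word_mon u + \sum_(u | ~~ movable u) signed_mon u.
Proof.
have -> : \sum_(u | ~~ movable u) signed_mon u = \sum_u signed_mon u.
  by rewrite [RHS](bigID (@movable n m)) /= sum_movable_signed_mon add0r.
rewrite [\sum_u word_mon u](bigID (fun u => butler (std u))) /=.
rewrite [\sum_u signed_mon u](bigID (fun u => butler (std u))) /=.
rewrite [X in _ = _ + (X + _)](eq_bigr (@word_mon n m)); last by move=> u Hb; rewrite /signed_mon Hb.
rewrite [X in _ = _ + (_ + X)](eq_bigr (fun u => - @word_mon n m u)); last first.
  by move=> u /negbTE Hb; rewrite /signed_mon Hb.
by rewrite sumrN mulr2n addrACA subrr addr0.
Qed.

End SignedSum.

Lemma sum_signed_mon_split n m (F A B : pred {ffun 'I_n -> 'I_m}) :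
  (forall u, F u = A u || B u) -> (forall u, ~~ (A u && B u)) ->
  (forall u, F u -> butler (std u) = A u) ->
  \sum_(u | F u) signed_mon u = \sum_(u | A u) word_mon u - \sum_(u | B u) word_mon u.
Proof.
move=> FAB AB FA; rewrite (bigID A) /= -sumrN; congr (_ + _); apply: eq_big => u.
- by rewrite FAB andbC; case: (A u).
- by move=> /andP[Fu Au]; rewrite /signed_mon FA ?Au.
- by rewrite FAB andbC; move: (AB u); case: (A u) => //= /negbTE ->.
- by move=> /andP[Fu /negbTE nAu]; rewrite /signed_mon FA ?nAu.
Qed.

Section SymmetricPolynomials.
Variable m : nat.

Definition xsum (P : pred 'I_m) : {mpoly int[m]} := \sum_(i | P i) 'X_i.
Definition h1 : {mpoly int[m]} := \sum_(i < m) 'X_i.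
Definition h2 : {mpoly int[m]} := \sum_(z : 'I_m) 'X_z * xsum [pred i : 'I_m | (i <= z)%N].
Definition e2 : {mpoly int[m]} := \sum_(z : 'I_m) 'X_z * xsum [pred i : 'I_m | (z < i)%N].

Lemma h1_split (z : 'I_m) : h1 = xsum [pred i : 'I_m | (i <= z)%N] + xsum [pred i : 'I_m | (z < i)%N].
Proof.
rewrite /h1 /xsum (bigID (fun i : 'I_m => (i <= z)%N)) /=; congr (_ + _).
by apply: eq_bigl => i /=; rewrite ltnNge.
Qed.

Lemma h2_add_e2 : h2 + e2 = h1 ^+ 2.
Proof.
rewrite /h2 /e2 -big_split /= expr2 {1}/h1 mulr_suml; apply: eq_bigr => z _.
by rewrite -mulrDr -h1_split.
Qed.

Lemma h2_sub_e2 : h2 - e2 = \sum_(z : 'I_m) 'X_z ^+ 2.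
Proof.
rewrite /h2 /e2 /xsum.
under eq_bigr => z _ do rewrite big_mkcond mulr_sumr /=.
under [X in _ - X]eq_bigr => z _ do rewrite big_mkcond mulr_sumr /=.
rewrite [X in _ - X]exchange_big /= -sumrB; apply: eq_bigr => z _.
rewrite -sumrB (bigD1 z) //= big1 ?addr0; first by rewrite leqnn ltnn mulr0 subr0 expr2.
move=> i /negbTE iz; rewrite -val_eqE in iz.
case: (ltngtP i z) => H.
- by rewrite mulrC subrr.
- by rewrite !mulr0 subrr.
- by move: iz; rewrite /= H eqxx.
Qed.

Lemma hcomplete1 : hcomplete m 1 = h1.
Proof.
rewrite /hcomplete (reindex_onto (fun i : 'I_m => [tuple i]) (fun t => thead t)).
  apply: eq_big => [i|i _]; last by rewrite big_ord1.
  by rewrite theadE eqxx andbT; apply/forallP => -[[|]].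
by move=> t _; apply: eq_from_tnth => j; rewrite (ord1 j) /= [in RHS](tuple_eta t).
Qed.

Lemma hcomplete2 : hcomplete m 2 = h2.
Proof.
rewrite /hcomplete (reindex_onto (fun p : 'I_m * 'I_m => [tuple p.2; p.1])
                      (fun t => (tnth t 1, tnth t 0))).
  rewrite /h2 /xsum; under [RHS]eq_bigr => z _ do rewrite mulr_sumr.
  rewrite pair_big_dep /=; apply: eq_big => [[z i]|[z i] _] /=.
    rewrite (_ : (tnth [tuple i; z] 1, tnth [tuple i; z] 0) == (z, i)) ?andbT;
      last exact/eqP.
    by apply/forallP/idP => [/(_ ord0) //|H [[|[|k]] Hk]].
  by rewrite big_ord_recr big_ord1 /= mulrC.
move=> t _; apply: eq_from_tnth => -[[|[|k]] Hk] //=.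
  by rewrite (tnth_nth (tnth t ord0)) /= (_ : Ordinal Hk = ord0) //; apply: val_inj.
by rewrite (tnth_nth (tnth t ord0)) /= (_ : Ordinal Hk = 1) //; apply: val_inj.
Qed.

Lemma hpart_hook n : hpart m (2%N :: nseq n 1%N) = h2 * h1 ^+ n.
Proof.
rewrite /hpart big_cons hcomplete2 big_nseq hcomplete1; congr (_ * _).
by elim: n => [|n IH] //=; rewrite IH exprS.
Qed.

End SymmetricPolynomials.

Section WordSums.
Variables (n m : nat).
Implicit Types (u : {ffun 'I_n -> 'I_m}).

Lemma sum_word_mon_cond (P : 'I_n -> pred 'I_m) :
  \sum_(u : {ffun 'I_n -> 'I_m} | [forall j, P j (u j)]) word_mon u = \prod_(j < n) xsum (P j).
Proof.
rewrite big_mkcond /=; under [RHS]eq_bigr => j _ do rewrite /xsum big_mkcond /=.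
rewrite bigA_distr_bigA /=; apply: eq_bigr => u _.
case: (boolP [forall j, P j (u j)]) => [/forallP H|/forallPn [j Hj]].
  by apply: eq_bigr => j _; rewrite H.
by rewrite (bigD1 j) //= (negbTE Hj) mul0r.
Qed.

Lemma sum_word_mon_at (s : seq 'I_n) (P : 'I_n -> pred 'I_m) : uniq s ->
  \sum_(u : {ffun 'I_n -> 'I_m} | all (fun j => P j (u j)) s) word_mon u =
  \prod_(j <- s) xsum (P j) * h1 m ^+ (n - size s).
Proof.
move=> us; pose P' j := if j \in s then P j else predT.
rewrite (eq_bigl (fun u : {ffun 'I_n -> 'I_m} => [forall j, P' j (u j)])); last first.
  move=> u; apply/allP/forallP => [H j|H j js]; last by have := H j; rewrite /P' js.
  by rewrite /P'; case: ifP => // /H.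
rewrite sum_word_mon_cond (bigID (mem s)) /= -big_uniq //.
congr (_ * _); first by apply: eq_big_seq => j js; rewrite /P' js.
rewrite (eq_bigr (fun _ => h1 m)); last by move=> j /negbTE js; rewrite /P' js.
rewrite prodr_const; congr (_ ^+ _).
rewrite -(card_uniqP us) -[n in (n - _)%N](card_ord n) -(cardC (mem s)) addKn.
by apply: eq_card => j; rewrite !inE.
Qed.

Lemma sum_word_mon : \sum_(u : {ffun 'I_n -> 'I_m}) word_mon u = h1 m ^+ n.
Proof.
have := @sum_word_mon_at [::] (fun _ => predT) erefl.
by rewrite big_nil mul1r subn0 => <-; apply: eq_bigl.
Qed.

(* Classify the words by their letter [z] at position [c]. *)
Lemma sum_word_mon_pinned (c : 'I_n) (s : seq 'I_n) (Q : 'I_m -> pred 'I_m) :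
  uniq (c :: s) ->
  \sum_(u : {ffun 'I_n -> 'I_m} | all (fun j => Q (u c) (u j)) s) word_mon u =
  \sum_(z : 'I_m) 'X_z * xsum (Q z) ^+ size s * h1 m ^+ (n - (size s).+1).
Proof.
move=> ucs; have [cs us] : c \notin s /\ uniq s by apply/andP.
rewrite (partition_big (fun u : {ffun 'I_n -> 'I_m} => u c) predT) //=; apply: eq_bigr => z _.
pose P (j : 'I_n) : pred 'I_m := if j == c then xpred1 z else Q z.
rewrite (eq_bigl (fun u : {ffun 'I_n -> 'I_m} => all (fun j => P j (u j)) (c :: s)));
  last first.
  move=> u /=; rewrite /P eqxx andbC; case: eqP => //= ->.
  by apply: eq_in_all => j js; rewrite (_ : (j == c) = false) //; apply: contraNF cs => /eqP <-.
rewrite sum_word_mon_at // big_cons /P eqxx /xsum big_pred1_eq /=.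
congr (_ * _ * _); rewrite (eq_big_seq (fun=> xsum (Q z))); last first.
  by move=> j js; rewrite (_ : (j == c) = false) //; apply: contraNF cs => /eqP <-.
by rewrite big_uniq // prodr_const (card_uniqP us).
Qed.

End WordSums.

Section FixedSums.
Variables (n m : nat).
Implicit Types (u : {ffun 'I_n -> 'I_m}).

Lemma sum_fixed_odd : (2 <= n)%N -> odd n ->
  \sum_(u : {ffun 'I_n -> 'I_m} | ~~ movable u) signed_mon u =
  (h2 m - e2 m) * h1 m ^+ (n - 2).
Proof.
move=> n2 n_odd; have Ha : (n - 2 < n)%N by lia.
have Hc : (n - 1 < n)%N by lia.
set a := Ordinal Ha; set c := Ordinal Hc.
have uca : uniq [:: c; a] by rewrite /= inE -val_eqE /=; lia.
have fixedE u : ~~ movable u = (u a == u c).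
  by rewrite not_movable_odd // -[(n - 2)%N]/(nat_of_ord a) -[(n - 1)%N]/(nat_of_ord c)
     !wval_ord val_eqE.
rewrite (@sum_signed_mon_split _ _ _ (fun u => all (fun j => xpred1 (u c) (u j)) [:: a]) pred0).
- rewrite [X in _ - X]big_pred0 // subr0 (sum_word_mon_pinned xpred1 uca) /=.
  rewrite h2_sub_e2 mulr_suml.
  by apply: eq_bigr => z _; rewrite /xsum big_pred1_eq expr2.
- by move=> u; rewrite orbF fixedE /= andbT.
- by move=> u; rewrite andbF.
move=> u; rewrite not_movable_odd // => /eqP E; rewrite /= andbT -fixedE not_movable_odd //.
by rewrite E eqxx (proj2 (butler_tie_odd n2 n_odd E)).
Qed.

Lemma sum_fixed_even : (4 <= n)%N -> ~~ odd n ->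
  \sum_(u : {ffun 'I_n -> 'I_m} | ~~ movable u) signed_mon u =
  (h2 m - e2 m) * h1 m ^+ (n - 2).
Proof.
move=> n4 n_even.
have Ha : (n - 3 < n)%N by lia.
have Hb : (n - 2 < n)%N by lia.
have Hc : (n - 1 < n)%N by lia.
set a := Ordinal Ha; set b := Ordinal Hb; set c := Ordinal Hc.
have ucab : uniq [:: c; a; b] by rewrite /= !inE -!val_eqE /=; lia.
have wvalE u : [/\ wval u (n - 3) = u a, wval u (n - 2) = u b & wval u (n - 1) = u c].
  by rewrite -[(n - 3)%N]/(nat_of_ord a) -[(n - 2)%N]/(nat_of_ord b)
     -[(n - 1)%N]/(nat_of_ord c) !wval_ord.
rewrite (@sum_signed_mon_split _ _ _ (last_max (m := m)) (last_min (m := m))); last 3 first.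
- by move=> u; case: (fixed_even n4 n_even u).
- by move=> u; case: (fixed_even n4 n_even u).
- by move=> u; case: (fixed_even n4 n_even u).
rewrite (eq_bigl (fun u => all (fun j => (u j <= u c)%N) [:: a; b])); last first.
  by move=> u; rewrite /last_max /= andbT; case: (wvalE u) => -> -> ->.
rewrite [X in _ - X](eq_bigl (fun u => all (fun j => (u c < u j)%N) [:: a; b])); last first.
  by move=> u; rewrite /last_min /= andbT; case: (wvalE u) => -> -> ->.
rewrite (sum_word_mon_pinned (fun z => [pred i : 'I_m | (i <= z)%N]) ucab).
rewrite (sum_word_mon_pinned (fun z => [pred i : 'I_m | (z < i)%N]) ucab) /=.
rewrite /h2 /e2 -!sumrB mulr_suml; apply: eq_bigr => z _.
have -> : h1 m ^+ (n - 2) = h1 m * h1 m ^+ (n - 3) by rewrite -exprS; congr (_ ^+ _); lia.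
set E := h1 m ^+ (n - 3); rewrite (h1_split z).
by ring.
Qed.

End FixedSums.

Lemma sum_fixed_two m :
  \sum_(u : {ffun 'I_2 -> 'I_m} | ~~ movable u) signed_mon u = h2 m - e2 m.
Proof.
set c : 'I_2 := ord_max; set a : 'I_2 := ord0.
rewrite (@sum_signed_mon_split _ _ _ (fun u => all (fun j => (u j <= u c)%N) [:: a])
                                     (fun u => all (fun j => (u c < u j)%N) [:: a])).
- have uca : uniq [:: c; a] by [].
  rewrite (sum_word_mon_pinned (fun z => [pred i : 'I_m | (i <= z)%N]) uca).
  rewrite (sum_word_mon_pinned (fun z => [pred i : 'I_m | (z < i)%N]) uca) /=.
  by rewrite /h2 /e2; congr (_ - _); apply: eq_bigr => z _; rewrite expr1 mulr1.
- by move=> u; rewrite not_movable_two /= !andbT leqNgt orNb.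
- by move=> u; rewrite /= !andbT leqNgt andNb.
by move=> u _; rewrite butler_two /= andbT -(wval_ord u a) -(wval_ord u c).
Qed.

Lemma sum_fixed n m : (2 <= n)%N ->
  \sum_(u : {ffun 'I_n -> 'I_m} | ~~ movable u) signed_mon u =
  (h2 m - e2 m) * h1 m ^+ (n - 2).
Proof.
move=> n2; case: (boolP (odd n)) => n_odd; first exact: sum_fixed_odd.
have [n2e|n4] : n = 2%N \/ (4 <= n)%N by move: n2 n_odd; lia.
  by subst n; rewrite sum_fixed_two mulr1.
exact: sum_fixed_even.
Qed.

Unset Implicit Arguments.
Set Strict Implicit.

Theorem proposition4p6 (n : nat) (hn : (2 <= n)%N) (m : nat) :
  \sum_(w : 'S_n | butler w) gesselF m n (iDes w)
  = hpart m (2%N :: nseq (n - 2) 1%N).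
Proof.
rewrite (sum_gesselF_std m (@butler n)) hpart_hook.
apply: (@mpoly_int_mulr2n_inj m) => /=.
rewrite sum_butler_word_mon2 // sum_word_mon sum_fixed //.
rewrite -[n in h1 m ^+ n](subnKC hn) exprD -h2_add_e2.
by ring.
Qed.
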